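(* Let $g\ge 1$ and consider $2g$ variables $\lambda_1,\dots,\lambda_g,\mu_1,\dots,\mu_g$ equipped with a Poisson bracket such that, for all $i,j\in\{1,\dots,g\}$, $$\{\lambda_i,\lambda_j\}=0,\qquad \{\mu_i,\mu_j\}=0,\qquad \{\lambda_i,\mu_j\}=p(\lambda_i,\mu_i)\,\delta_{ij}$$ for some function $p$ of two variables (the form of $p$ is arbitrary). Let $R_0,R_1,\dots,R_g$ be fixed (non-dynamical) functions of two variables $(\lambda,\mu)$. Define the $g\times g$ matrix $B$ and the column vector $V$ by $B_{ij}=R_j(\lambda_i,\mu_i)$ and $V_i=R_0(\lambda_i,\mu_i)$, and assume $\det B\neq 0$ (on the region considered). Define $H=(H_1,\dots,H_g)^T$ by $H=-B^{-1}V$, i.e. $H$ is the unique solution of the linear system $$\sum_{j=1}^g R_j(\lambda_i,\mu_i)H_j+R_0(\lambda_i,\mu_i)=0,\qquad i=1,\dots,g.$$ Then $\{H_i,H_j\}=0$ for all $i,j\in\{1,\dots,g\}$.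
   Context: Motivation: the $H_j$ are the dynamical moduli of a curve $\Gamma:\ R_0(\lambda,\mu)+\sum_{j=1}^g R_j(\lambda,\mu)H_j=0$ in $\mathbb{C}^2$, determined by requiring that the curve passes through the $g$ points $(\lambda_i,\mu_i)$. The Poisson bracket is extended to smooth functions of the $\lambda_i,\mu_i$ by the Leibniz rule. *)

From HB Require Import structures.
From mathcomp Require Import all_boot all_order all_algebra.
From mathcomp Require Import all_classical all_reals all_analysis.
Set Implicit Arguments. Unset Strict Implicit. Unset Printing Implicit Defensive.
Import Order.TTheory GRing.Theory Num.Theory.
Import numFieldNormedType.Exports.
Local Open Scope ring_scope.

Section Defs.
Variables (R : realType) (g : nat).

Definition state := ('rV[R]_g * 'rV[R]_g)%type.

Definition lam (z : state) (i : 'I_g) : R := z.1 0 i.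
Definition mu (z : state) (i : 'I_g) : R := z.2 0 i.

(* B_ij = R_j(lambda_i, mu_i), with Rs j standing for R_{j+1}. *)
Definition Bmat (Rs : 'I_g -> R * R -> R) (z : state) : 'M[R]_g :=
  \matrix_(i, j) Rs j (lam z i, mu z i).

Definition Vvec (R0 : R * R -> R) (z : state) : 'cV[R]_g :=
  \col_i R0 (lam z i, mu z i).

Definition Hvec (R0 : R * R -> R) (Rs : 'I_g -> R * R -> R) (z : state)
  : 'cV[R]_g := - (invmx (Bmat Rs z) *m Vvec R0 z).

Definition Hcomp R0 Rs (i : 'I_g) (z : state) : R := Hvec R0 Rs z i 0.

Definition dlam (k : 'I_g) : state := (delta_mx 0 k, 0).
Definition dmu (k : 'I_g) : state := (0, delta_mx 0 k).

(* Poisson bracket obtained by extending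
   {lambda_i,lambda_j}=0, {mu_i,mu_j}=0, {lambda_i,mu_j}=p(lambda_i,mu_i) delta_ij
   to functions of (lambda, mu) by the Leibniz rule. *)
Definition pbracket (p : R -> R -> R) (F G : state -> R) (z : state) : R :=
  \sum_(k < g) p (lam z k) (mu z k) *
     ('D_(dlam k) F z * 'D_(dmu k) G z - 'D_(dmu k) F z * 'D_(dlam k) G z).

End Defs.

(* Let Gamma_z(x) = R_0(x) + sum_j H_j(z) R_j(x); it vanishes at the g points
   z_l = (lambda_l, mu_l).  Moving only z_k changes B H(z) + V in row k alone,
   by the value of Gamma_z at the moved point, so the derivative of H_i along
   either coordinate of z_k is -(B^-1)_ik times a derivative of Gamma_z at z_k
   that does not depend on i.  The k-th term of {H_i, H_j} is then
   c_i c_j (a b - b a) = 0. *)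
From HB Require Import structures.
From mathcomp Require Import all_boot all_order all_algebra.
From mathcomp Require Import all_classical all_reals all_analysis.
From mathcomp Require Import ring.
Import Order.TTheory GRing.Theory Num.Theory.
Import numFieldNormedType.Exports.
Local Open Scope ring_scope.
Local Open Scope classical_set_scope.

Lemma cvg_det {R : numFieldType} {T : Type} {F : set_system T} {FF : Filter F}
  {n} {M : T -> 'M[R]_n} {A : 'M[R]_n} :
  (forall i j, M x i j @[x --> F] --> A i j) -> \det (M x) @[x --> F] --> \det A.
Proof.
move=> cvgM_entries.
apply: cvg_big => //; first exact: pseudometric_normed_Zmodule.add_continuous.
move=> s _; apply: cvgM; first exact: cvg_cst.
by apply: cvg_big => //; exact: mul_continuous.
Qed.

Section MatrixLimits.
Context {R : numFieldType} {T : Type} {F : set_system T} {n : nat}.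
Context {M : T -> 'M[R]_n} {A : 'M[R]_n}.
Hypothesis cvgM_entries : forall i j, M x i j @[x --> F] --> A i j.
Hypothesis unitA : A \in unitmx.

Lemma near_unitmx {FF : Filter F} : \forall x \near F, M x \in unitmx.
Proof.
have detA : \det A != 0 by rewrite -unitfE -unitmxE.
have : \forall x \near F, \det (M x) != 0.
  exact: cvgr_neq0 _ (cvg_det cvgM_entries) detA.
by apply: filterS => x; rewrite unitmxE unitfE.
Qed.

Lemma cvg_invmx {FF : ProperFilter F} i j :
  invmx (M x) i j @[x --> F] --> invmx A i j.
Proof.
have detA : \det A != 0 by rewrite -unitfE -unitmxE.
have cvg_cofactor : cofactor (M x) j i @[x --> F] --> cofactor A j i.
  rewrite /cofactor; apply: cvgM; first exact: cvg_cst.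
  apply: cvg_det => a b; under eq_fun do rewrite !mxE.
  by rewrite !mxE; exact: cvgM_entries.
have -> : invmx A i j = (\det A)^-1 * cofactor A j i by rewrite /invmx unitA !mxE.
apply: cvg_trans (cvgM (cvgV detA (cvg_det cvgM_entries)) cvg_cofactor).
apply: near_eq_cvg; apply: filterS near_unitmx => x Mx.
by rewrite /invmx Mx !mxE.
Qed.

End MatrixLimits.

Lemma mulmx_col_supp1 {R : pzRingType} {m n} {A : 'M[R]_(m, n)} {u : 'cV[R]_n} k i :
  (forall l, l != k -> u l 0 = 0) -> (A *m u) i 0 = A i k * u k 0.
Proof. by move=> u0; rewrite mxE (bigD1 k) //= big1 ?addr0 // => l /u0 ->; rewrite mulr0. Qed.

Section DerivativesOfH.
Context {R : realType} {g : nat} {R0 : R * R -> R} {Rs : 'I_g -> R * R -> R}.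
Hypotheses (dR0 : forall x, differentiable R0 x)
  (dRs : forall j x, differentiable (Rs j) x).

Definition node (z : state R g) (i : 'I_g) : R * R := (lam z i, mu z i).

Definition curve_fn (z : state R g) : R * R -> R :=
  R0 + \sum_(j < g) (Hvec R0 Rs z j 0 *: Rs j).

Lemma curve_fnE z x : curve_fn z x = R0 x + \sum_j Rs j x * Hvec R0 Rs z j 0.
Proof. by rewrite /curve_fn /= fct_sumE; under eq_bigr do rewrite /= mulrC. Qed.

Lemma differentiable_curve_fn z x : differentiable (curve_fn z) x.
Proof.
apply: differentiableD => //; apply: differentiable_sum => j.
exact: differentiableZ.
Qed.

Lemma BmatH_addV z z' i :
  (Bmat Rs z' *m Hvec R0 Rs z + Vvec R0 z') i 0 = curve_fn z (node z' i).
Proof.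
rewrite curve_fnE addrC !mxE; congr (_ + _).
by apply: eq_bigr => j _; rewrite !mxE.
Qed.

Lemma curve_fn_node z i : Bmat Rs z \in unitmx -> curve_fn z (node z i) = 0.
Proof.
move=> Bu; rewrite -BmatH_addV /Hvec mulmxN mulmxA mulmxV // mul1mx addNr.
by rewrite mxE.
Qed.

Context {z : state R g} {k : 'I_g} {v : state R g} {w : R * R}.
Hypothesis Bu : Bmat Rs z \in unitmx.

Hypothesis node_shift : forall t i,
  node (t *: v + z) i = node z i + ((i == k)%:R * t) *: w.

Lemma cvg_Bmat_shift a b :
  Bmat Rs (t *: v + z) a b @[t --> 0^'] --> Bmat Rs z a b.
Proof.
under eq_fun do rewrite mxE -/(node _ a) node_shift.
rewrite mxE -/(node z a).
apply: (cvg_comp _ (Rs b) _ (differentiable_continuous (dRs b (node z a)))).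
suff : node z a + ((a == k)%:R * t) *: w @[t --> 0^'] -->
       node z a + ((a == k)%:R * 0) *: w by rewrite mulr0 scale0r addr0.
apply: cvgD; first exact: cvg_cst.
apply: cvgZ (cvg_cst _); apply: cvgM; first exact: cvg_cst.
exact: cvg_within_filter.
Qed.

Lemma Hcomp_shift_sub t i : Bmat Rs (t *: v + z) \in unitmx ->
  Hcomp R0 Rs i (t *: v + z) - Hcomp R0 Rs i z
  = - invmx (Bmat Rs (t *: v + z)) i k * curve_fn z (node z k + t *: w).
Proof.
move=> Btu; set Bt := Bmat Rs (t *: v + z).
have -> : Hcomp R0 Rs i (t *: v + z) - Hcomp R0 Rs i z
    = (Hvec R0 Rs (t *: v + z) - Hvec R0 Rs z) i 0.
  by rewrite [RHS]mxE [X in _ = _ + X]mxE.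
have -> : Hvec R0 Rs (t *: v + z) - Hvec R0 Rs z
    = - (invmx Bt *m (Bt *m Hvec R0 Rs z + Vvec R0 (t *: v + z))).
  by rewrite mulmxDr mulmxA mulVmx // mul1mx opprD addrC.
rewrite [LHS]mxE (mulmx_col_supp1 k) => [|l /negPf lk]; rewrite BmatH_addV node_shift.
  by rewrite eqxx mul1r mulNr.
by rewrite lk mul0r scale0r addr0 curve_fn_node.
Qed.

Lemma derive_Hcomp_shift i :
  'D_v (Hcomp R0 Rs i) z = - invmx (Bmat Rs z) i k * 'D_w (curve_fn z) (node z k).
Proof.
rewrite /derive; apply: cvg_lim; first exact: norm_hausdorff.
apply: cvg_trans (cvgM (cvgN (cvg_invmx cvg_Bmat_shift Bu i k))
  (diff_derivable (differentiable_curve_fn z (node z k)))).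
apply: near_eq_cvg; apply: filterS (near_unitmx cvg_Bmat_shift Bu) => t Btu.
rewrite /= Hcomp_shift_sub // curve_fn_node // subr0 addrC.
by rewrite scalerAr.
Qed.

End DerivativesOfH.

Lemma node_shift_lam {R : realType} {g} (z : state R g) k t i :
  node (t *: @dlam R g k + z) i = node z i + ((i == k)%:R * t) *: ((1, 0) : R * R).
Proof.
rewrite /node /lam /mu /dlam /= !mxE eqxx; congr pair => /=.
  by rewrite mulrC addrC; congr (_ + _); rewrite -[LHS]mulr1.
by rewrite mulr0 scaler0 add0r addr0.
Qed.

Lemma node_shift_mu {R : realType} {g} (z : state R g) k t i :
  node (t *: @dmu R g k + z) i = node z i + ((i == k)%:R * t) *: ((0, 1) : R * R).
Proof.
rewrite /node /lam /mu /dmu /= !mxE eqxx; congr pair => /=.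
  by rewrite mulr0 scaler0 add0r addr0.
by rewrite mulrC addrC; congr (_ + _); rewrite -[LHS]mulr1.
Qed.

Theorem theorem1 (R : realType) (g : nat) (hg : (0 < g)%N)
  (p : R -> R -> R) (R0 : R * R -> R) (Rs : 'I_g -> R * R -> R) :
  (forall x : R * R, differentiable R0 x) ->
  (forall (j : 'I_g) (x : R * R), differentiable (Rs j) x) ->
  forall z : state R g, Bmat Rs z \in unitmx ->
  forall i j : 'I_g,
    pbracket p (Hcomp R0 Rs i) (Hcomp R0 Rs j) z = 0.
Proof.
move=> dR0 dRs z Bu i j; apply: big1 => k _.
rewrite !(derive_Hcomp_shift dR0 dRs Bu (node_shift_lam z k)).
rewrite !(derive_Hcomp_shift dR0 dRs Bu (node_shift_mu z k)).
ring.
Qed.
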